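(* Let $(G,k,M^*,M)$ be a critical tuple and fix an edge $e\in E^+(C^+)$. Let $e_s,e_f$ be distinct edges of $C^+$ lying on $C_e$ and let $\mathcal{P}=C_e[e_s,e_f]$ be the sub-path of $C_e$ from $e_s$ to $e_f$ (inclusive). Then either $C^+[e_s,e_f]\subseteq r_f(\mathcal{P})$ or $C^+[e_f,e_s]\subseteq r_b(\mathcal{P})$.
   Context: $R(H)$ is the set of red edges of an edge set $H$. For a perfect matching $M$ of a red/blue edge-colored bipartite graph $G=(A\sqcup B,E)$, $G_M$ is the directed graph on $A\sqcup B$ with edges of $M$ oriented from $A$ to $B$ and other edges from $B$ to $A$, weighted by $w_M(e)=0$ for blue $e$, $-1$ for red $e\in M$, $+1$ for red $e\notin M$; $E^+(H)$ (resp. $E^-(H)$) is the set of red edges of $H$ not in $M$ (resp. in $M$), $w_M(H)=|E^+(H)|-|E^-(H)|$. Paths and cycles are directed and identified with edge sets. For a directed cycle $C$ and sub-paths/edges $P_1,P_2$ of it, $C[P_1,P_2]$ is the sub-path of $C$ from $P_1$ to $P_2$, both included. For an edge $e$, $M^e$ is a perfect matching containing $e$ with the minimum number of red edges among those containing $e$. A tuple $(G,k,M^*,M)$ is critical if: every edge of $G$ lies in some perfect matching; $|R(M^* )|=k$; $|R(M)|<\frac13k$; every directed cycle $C$ of $G_M$ with $w_M(C)>0$ has $|E^+(C)|>\frac23k$; and $|R(M^e)|<\frac13k$ for every red $e\in M^*\setminus M$. $C^+$ is the unique positive-weight directed cycle of $G_M$ contained in $M\Delta M^*$. For $e\in E^+(C^+)$,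 $C_e$ is the unique directed cycle of $G_M$ in $M\Delta M^e$ containing $e$. A jump of $C_e$ is a sub-path $Q$ of $C_e$ with endpoints on $C^+$, no inner vertex on $C^+$ and $Q\cap C^+=\emptyset$; interjumps are the sub-paths of $C_e$ contained in $C^+$ between consecutive jumps. For a jump $Q$, $C_Q$ is the unique directed cycle in $C^+\cup Q$ containing $Q$; $Q$ is forward if $w_M(C_Q)>0$, backward otherwise; reach $r(Q)=C^+\setminus C_Q$ if forward, $r(Q)=C_Q\setminus Q$ if backward. For a sub-path $\mathcal{P}$ of $C_e$ with endpoints on $C^+$, the forward reach $r_f(\mathcal{P})$ is the union of $\mathcal{P}\cap C^+$ (the parts of interjumps in $\mathcal{P}$) and the reaches of all forward jumps contained in $\mathcal{P}$; the backward reach $r_b(\mathcal{P})$ is the union of the reaches of all backward jumps contained in $\mathcal{P}$. *)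

From mathcomp Require Import all_boot all_order all_algebra.
Set Implicit Arguments.
Unset Strict Implicit.
Unset Printing Implicit Defensive.
Import GRing.Theory Num.Theory.

(* A red/blue edge-coloured bipartite (multi)graph G = (A ⊔ B, E):
   edges form a finite type E, edge f joins ea f ∈ A and eb f ∈ B,
   red f says f is red (otherwise blue).  Vertices are A + B. *)
Section Matchings.
Variables (A B E : finType) (ea : E -> A) (eb : E -> B) (red : pred E).

Definition vtx := (A + B)%type.

Definition simple_graph : Prop := injective (fun f => (ea f, eb f)).

Definition incident (f : E) (v : vtx) : bool :=
  (v == inl (ea f)) || (v == inr (eb f)).

Definition perfect (M : {set E}) : Prop :=
  forall v : vtx, #|[set f in M | incident f v]| = 1%N.

Definition Rd (H : {set E}) : {set E} := [set f in H | red f].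

(* G_M : edges of M oriented A -> B, others B -> A *)
Definition tl (M : {set E}) (f : E) : vtx :=
  if f \in M then inl (ea f) else inr (eb f).
Definition hd (M : {set E}) (f : E) : vtx :=
  if f \in M then inr (eb f) else inl (ea f).

Definition Eplus (M H : {set E}) : {set E} := [set f in H | red f & f \notin M].
Definition Eminus (M H : {set E}) : {set E} := [set f in H | red f & f \in M].
Definition wM (M H : {set E}) : int := (#|Eplus M H|%:Z - #|Eminus M H|%:Z)%R.

Definition dcycle_seq (M : {set E}) (s : seq E) : Prop :=
  match s with
  | [::] => False
  | f0 :: _ =>
      (forall i, (i.+1 < size s)%N ->
         hd M (nth f0 s i) = tl M (nth f0 s i.+1))
      /\ hd M (last f0 s) = tl M f0
      /\ uniq (map (tl M) s)
  end.

(* directed cycles are identified with their edge sets *)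
Definition is_dcycle (M C : {set E}) : Prop :=
  exists s, dcycle_seq M s /\ C = [set f in s].

Definition nxt (M C : {set E}) (f : E) : E :=
  odflt f [pick g in C | tl M g == hd M f].

(* C[x, y]: the sub-path of the directed cycle C from edge x to edge y,
   both included *)
Definition carc (M C : {set E}) (x y : E) : {set E} :=
  [set z | [exists i : 'I_#|E|.+1,
      (z == iter i (nxt M C) x) &&
      [forall j : 'I_#|E|.+1, (j < i)%N ==> (iter j (nxt M C) x != y)]]].

Definition on_set (C : {set E}) (v : vtx) : bool :=
  [exists f in C, incident f v].

Definition subpath (M C Q : {set E}) (x y : E) : Prop :=
  [/\ x \in C, y \in C, Q = carc M C x y & Q != C].

Definition sym_diff (X Y : {set E}) : {set E} := (X :\: Y) :|: (Y :\: X).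

Definition is_Me (e : E) (Me : {set E}) : Prop :=
  [/\ perfect Me, e \in Me &
      forall M', perfect M' -> e \in M' -> (#|Rd Me| <= #|Rd M'|)%N].

Definition critical (k : nat) (Ms M : {set E}) : Prop :=
  [/\ (forall f : E, exists Mf, perfect Mf /\ f \in Mf),
      perfect Ms, perfect M,
      #|Rd Ms| = k &
      [/\ (3 * #|Rd M| < k)%N,
      (forall C, is_dcycle M C -> (0 < wM M C)%R -> (2 * k < 3 * #|Eplus M C|)%N) &
      (forall f, red f -> f \in Ms :\: M ->
         forall Mf, is_Me f Mf -> (3 * #|Rd Mf| < k)%N)]].

Definition is_Cplus (Ms M Cp : {set E}) : Prop :=
  [/\ is_dcycle M Cp, Cp \subset sym_diff M Ms & (0 < wM M Cp)%R].

Definition is_Ce (M Me Ce : {set E}) (e : E) : Prop :=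
  [/\ is_dcycle M Ce, Ce \subset sym_diff M Me & e \in Ce].

Definition jump (M Cp Ce Q : {set E}) : Prop :=
  exists x y, [/\ subpath M Ce Q x y,
    on_set Cp (tl M x), on_set Cp (hd M y),
    (forall z, z \in Q -> z != y -> ~~ on_set Cp (hd M z)) &
    [disjoint Q & Cp]].

Definition is_CQ (M Cp Q CQ : {set E}) : Prop :=
  [/\ is_dcycle M CQ, CQ \subset Cp :|: Q & Q \subset CQ].

Definition forward (M Cp Q : {set E}) : Prop :=
  exists CQ, is_CQ M Cp Q CQ /\ (0 < wM M CQ)%R.
Definition backward (M Cp Q : {set E}) : Prop :=
  exists CQ, is_CQ M Cp Q CQ /\ ~ (0 < wM M CQ)%R.

Definition in_reach (M Cp Q : {set E}) (f : E) : Prop :=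
  exists CQ, is_CQ M Cp Q CQ /\
    (if (0 < wM M CQ)%R then f \in Cp :\: CQ else f \in CQ :\: Q).

Definition in_rf (M Cp Ce P : {set E}) (f : E) : Prop :=
  f \in P :&: Cp \/
  exists Q, [/\ jump M Cp Ce Q, Q \subset P, forward M Cp Q & in_reach M Cp Q f].

Definition in_rb (M Cp Ce P : {set E}) (f : E) : Prop :=
  exists Q, [/\ jump M Cp Ce Q, Q \subset P, backward M Cp Q & in_reach M Cp Q f].

End Matchings.

(* Walk along P = C_e[e_s, e_f], keeping an unwrapped integer position L on
   C^+ of the last vertex of C^+ reached, with the invariant that the C^+
   positions [a, L) lie in r_f(P) and [L, a] in r_b(P), where e_s = C^+(a).
   An edge of P on C^+ advances L by one.  A jump Q leaving C^+ at L and
   landing at a position v with L - |C^+| < v < L closes, with the arc [v, L)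
   of C^+, the cycle C_Q: if Q is forward its reach is the complementary arc
   [L, v + |C^+|) and L moves on to v + |C^+|; if Q is backward its reach is
   [v, L) and L moves back to v.  When the walk reaches e_f = C^+(L), either
   L >= a and C^+[e_s, e_f] lies in r_f(P), or L < a and C^+[e_f, e_s] lies
   in r_b(P). *)

From Pilot Require Import Defs.
From mathcomp Require Import all_boot all_order all_algebra.
From mathcomp Require Import zify ring.

Set Implicit Arguments.
Unset Strict Implicit.
Unset Printing Implicit Defensive.
Import GRing.Theory Num.Theory.

Local Open Scope ring_scope.

Lemma mulz_bounded_eq0 (q n : int) : 0 < n -> - n < q * n < n -> q = 0.
Proof.
move=> n_gt0 qn.
have [//|[q_ge1|q_le]] : q = 0 \/ 1 <= q \/ q <= -1 by lia.
all: nia.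
Qed.

Lemma int_euclid (x : int) (n : nat) : (0 < n)%N ->
  exists (q : int) (r : nat), x = r%:Z + q * n%:Z /\ (r < n)%N.
Proof.
by move=> n_gt0; exists (x %/ n)%Z, (absz (x %% n)%Z); have := divz_eq x n; lia.
Qed.

Lemma absz_modz_lt (i : int) (n : nat) : (0 < n)%N -> (absz (i %% n)%Z < n)%N.
Proof. lia. Qed.

Definition cnth (T : Type) (x0 : T) (s : seq T) (i : int) : T :=
  nth x0 s (absz (i %% size s)%Z).

Lemma cnth_map (T1 T2 : Type) (x0 : T1) (f : T1 -> T2) (s : seq T1) (i : int) :
  cnth (f x0) (map f s) i = f (cnth x0 s i).
Proof.
case: s => [|y s]; first by rewrite /cnth !nth_nil.
by rewrite /cnth size_map (nth_map x0) // absz_modz_lt.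
Qed.

Section CyclicNth.
Variables (T : eqType) (x0 : T) (s : seq T).
Local Notation n := (size s).
Local Notation c := (cnth x0 s).

Lemma cnth_shift (i q : int) : c (i + q * n) = c i.
Proof. by rewrite /cnth addrC modzMDl. Qed.

Lemma cnth_nat (j : nat) : (j < n)%N -> c j = nth x0 s j.
Proof. by move=> jn; rewrite /cnth modz_small //; lia. Qed.

Lemma mem_cnth (i : int) : (0 < n)%N -> c i \in s.
Proof. by move=> n_gt0; rewrite mem_nth // absz_modz_lt. Qed.

Lemma cnth_index x : x \in s -> c (index x s) = x.
Proof. by move=> xs; rewrite cnth_nat ?index_mem // nth_index. Qed.

Lemma cnth_window (i j : int) : (0 < n)%N ->
  exists j', [/\ c j' = c j, i <= j' < i + n & (i <= j -> j' <= j)].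
Proof.
move=> n_gt0; have [q [r [def_ji r_lt]]] := int_euclid (j - i) n_gt0.
exists (i + r); split; first by rewrite -(cnth_shift _ q); congr c; lia.
  by lia.
have [q_ge0|q_neg] : 0 <= q \/ q <= -1 by lia.
all: nia.
Qed.

Lemma cnth_inj (i j : int) : uniq s -> c i = c j -> i - n%:Z < j < i + n%:Z -> i = j.
Proof.
move=> s_uniq cij win; have n_gt0 : (0 < n)%N by lia.
move/eqP: cij; rewrite /cnth nth_uniq ?absz_modz_lt // => /eqP mod_ij.
have def_ij : i - j = ((i %/ n)%Z - (j %/ n)%Z) * n.
  rewrite {1}(divz_eq i n) {1}(divz_eq j n).
  have -> : (i %% n)%Z = (j %% n)%Z by lia.
  by ring.
have := @mulz_bounded_eq0 ((i %/ n)%Z - (j %/ n)%Z) n; lia.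
Qed.

End CyclicNth.

Lemma mkseqP (T : eqType) (F : nat -> T) (N : nat) z :
  reflect (exists2 k, (k < N)%N & z = F k) (z \in mkseq F N).
Proof.
apply: (iffP mapP) => [[k] | [k k_lt ->]]; last by exists k; rewrite // mem_iota.
by rewrite mem_iota => k_lt ->; exists k.
Qed.

Section DirectedCycle.
Variables (A B E : finType) (ea : E -> A) (eb : E -> B) (M : {set E}).
Local Notation tl := (tl ea eb M).
Local Notation hd := (hd ea eb M).

Lemma dcycle_mkseq (F : nat -> E) (N : nat) : (0 < N)%N ->
  (forall k, (k.+1 < N)%N -> hd (F k) = tl (F k.+1)) ->
  hd (F N.-1) = tl (F 0%N) ->
  {in gtn N &, injective (tl \o F)} ->
  dcycle_seq ea eb M (mkseq F N).
Proof.
move=> N_gt0 chain close tl_inj.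
have nthF x0 k : (k < N)%N -> nth x0 (mkseq F N) k = F k by move=> kN; rewrite nth_mkseq.
have tl_uniq : uniq (map tl (mkseq F N)) by rewrite /mkseq -map_comp; apply/mkseq_uniqP.
case def_s: (mkseq F N) => [|f0 s'].
  by move: (size_mkseq F N); rewrite def_s => N0; rewrite -N0 in N_gt0.
have f0E : f0 = F 0%N by rewrite -(nthF f0 0%N N_gt0) def_s.
rewrite /dcycle_seq; cbv beta iota; rewrite -def_s; split; [|split] => //.
- by move=> k; rewrite size_mkseq => kN; rewrite !nthF ?chain //; lia.
- by rewrite -nth_last size_mkseq nthF ?f0E ?close // prednK.
Qed.

Lemma incident_tl_hd f v : incident ea eb f v = (v == tl f) || (v == hd f).
Proof. by rewrite /incident /Defs.tl /Defs.hd; case: (f \in M); rewrite // orbC. Qed.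

Section OnCycle.
Variables (x0 : E) (s : seq E).
Hypothesis ds : dcycle_seq ea eb M s.
Local Notation n := (size s).
Local Notation c := (cnth x0 s).

Lemma dcycle_size_gt0 : (0 < n)%N.
Proof. by case: s ds. Qed.

Lemma dcycle_uniq_tl : uniq (map tl s).
Proof. by case: s ds => [|f0 s'] // [_ []]. Qed.

Lemma dcycle_uniq : uniq s.
Proof. exact: map_uniq dcycle_uniq_tl. Qed.

Lemma dcycle_size_le : (n <= #|E|)%N.
Proof. by rewrite -(card_uniqP dcycle_uniq) max_card. Qed.

Lemma dcycle_chain k : (k.+1 < n)%N -> hd (nth x0 s k) = tl (nth x0 s k.+1).
Proof.
case: s ds => [|f0 s'] // [chain _] k_lt.
by rewrite !(set_nth_default f0 x0) ?chain //; lia.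
Qed.

Lemma dcycle_close : hd (nth x0 s n.-1) = tl (nth x0 s 0).
Proof. by case: s ds => [|f0 s'] // [_ [close _]]; rewrite /= nth_last. Qed.

Lemma hd_cnth (i : int) : hd (c i) = tl (c (i + 1)).
Proof.
have n_gt0 := dcycle_size_gt0.
have [q [r [-> r_lt]]] := int_euclid i n_gt0.
rewrite addrAC !cnth_shift -PoszD addn1 cnth_nat //.
have [r1_lt|r1_ge] := ltnP r.+1 n; first by rewrite cnth_nat // dcycle_chain.
have -> : r = n.-1 by lia.
rewrite prednK //.
have -> : c n = c 0 by rewrite -(cnth_shift x0 s 0 1) add0r mul1r.
by rewrite cnth_nat // dcycle_close.
Qed.

(* [cnth_dcycle_inj] and [dcycle_window] restate [cnth_inj] and [cnth_window]
   with [size s] elaborated at [seq E] instead of at the underlying [eqType]: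
   [lia] treats the two elaborations as distinct atoms. *)
Lemma cnth_dcycle_inj (i j : int) :
  c i = c j -> i - n%:Z < j < i + n%:Z -> i = j.
Proof. exact: cnth_inj dcycle_uniq. Qed.

Lemma dcycle_window (i j : int) :
  exists j', [/\ c j' = c j, i <= j' < i + n%:Z & (i <= j -> j' <= j)].
Proof. by have := cnth_window x0 i j dcycle_size_gt0. Qed.

Lemma tl_cnth_inj (i j : int) :
  tl (c i) = tl (c j) -> i - n%:Z < j < i + n%:Z -> i = j.
Proof.
rewrite -!(cnth_map x0 tl) => tl_ij win.
by apply: (cnth_inj dcycle_uniq_tl tl_ij); rewrite size_map.
Qed.

Lemma dcycle_tl_inj : {in s &, injective tl}.
Proof.
move=> f g fs gs tl_fg; rewrite -(nth_index f fs) -(nth_index f gs); congr nth.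
apply/eqP; rewrite -(nth_uniq (tl f) _ _ dcycle_uniq_tl) ?size_map ?index_mem //.
by rewrite !(nth_map f) ?index_mem // !nth_index // tl_fg.
Qed.

Lemma nxt_cnth (i : int) : nxt ea eb M [set f in s] (c i) = c (i + 1).
Proof.
have c1s : c (i + 1) \in s by rewrite mem_cnth ?dcycle_size_gt0.
rewrite /nxt; case: pickP => [g /andP[] | /(_ (c (i + 1)))]; rewrite inE.
  by move=> gs /eqP; rewrite hd_cnth; apply: dcycle_tl_inj.
by rewrite c1s hd_cnth eqxx.
Qed.

Lemma iter_nxt_cnth (i : int) (k : nat) :
  iter k (nxt ea eb M [set f in s]) (c i) = c (i + k%:Z).
Proof.
elim: k => [|k IHk]; first by rewrite addr0.
by rewrite iterS IHk nxt_cnth -addrA -PoszD addn1.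
Qed.

Lemma mem_carc_cnth (i j : int) z : i <= j < i + n%:Z ->
  z \in carc ea eb M [set f in s] (c i) (c j) <-> exists2 k, i <= k <= j & z = c k.
Proof.
move=> win; have n_le := dcycle_size_le.
pose d := absz (j - i); have def_j : j = i + d%:Z by lia.
have d_lt : (d < #|E|.+1)%N by lia.
rewrite /carc inE; split.
  case/existsP => m /andP[/eqP -> /forallP before_j].
  have m_le : (m <= d)%N.
    rewrite leqNgt; apply/negP => d_lt_m.
    by have := before_j (Ordinal d_lt); rewrite /= d_lt_m iter_nxt_cnth -def_j eqxx.
  by exists (i + (m : nat)%:Z); rewrite ?iter_nxt_cnth //; lia.
case=> k k_win ->; have m_lt : (absz (k - i) < #|E|.+1)%N by lia.
apply/existsP; exists (Ordinal m_lt); rewrite /= iter_nxt_cnth.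
have -> : i + (absz (k - i))%:Z = k by lia.
rewrite eqxx /=; apply/forallP => m; apply/implyP => m_lt_k.
by rewrite iter_nxt_cnth; apply/eqP => /cnth_dcycle_inj; lia.
Qed.

Lemma on_dcycleP v :
  reflect (exists i, v = tl (c i)) (on_set ea eb [set f in s] v).
Proof.
apply: (iffP existsP) => [[f /andP[]] | [i ->]].
  rewrite inE incident_tl_hd => fs; rewrite -(cnth_index x0 fs).
  case/orP => /eqP ->; first by exists (index f s).
  by exists (index f s + 1); rewrite hd_cnth.
exists (c i); rewrite inE mem_cnth ?dcycle_size_gt0 //=.
by rewrite incident_tl_hd eqxx.
Qed.

End OnCycle.
End DirectedCycle.

Section Sweep.
Variables (A B E : finType) (ea : E -> A) (eb : E -> B) (red : pred E).
Variables (M : {set E}) (x0 : E) (sP sE : seq E).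
Hypotheses (dP : dcycle_seq ea eb M sP) (dE : dcycle_seq ea eb M sE).

Local Notation tl := (tl ea eb M).
Local Notation hd := (hd ea eb M).
Local Notation Cp := [set f in sP].
Local Notation Ce := [set f in sE].
Local Notation cP := (cnth x0 sP).
Local Notation cE := (cnth x0 sE).
Local Notation nP := (size sP).
Local Notation nE := (size sE).
Local Notation onCp v := (on_set ea eb Cp v).

Lemma mem_cP (x : int) : cP x \in sP.
Proof. exact/mem_cnth/(dcycle_size_gt0 dP). Qed.

Lemma mem_cE (x : int) : cE x \in sE.
Proof. exact/mem_cnth/(dcycle_size_gt0 dE). Qed.

Lemma onCp_tl f : f \in sP -> onCp (tl f).
Proof. by move=> fP; apply/(on_dcycleP x0 dP); exists (index f sP); rewrite cnth_index. Qed.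

Lemma onCp_hd f : f \in sP -> onCp (hd f).
Proof.
move=> fP; apply/(on_dcycleP x0 dP); exists (index f sP + 1).
by rewrite -{1}(cnth_index x0 fP) (hd_cnth x0 dP).
Qed.

Variables (a b : int) (D : nat).
Hypotheses (start : cE b = cP a) (D_gt0 : (0 < D)%N) (D_lt : (D < nE)%N).

Local Notation P := (carc ea eb M Ce (cE b) (cE (b + D%:Z))).

Lemma mem_P z : z \in P <-> exists2 k, b <= k <= b + D%:Z & z = cE k.
Proof. by apply: (mem_carc_cnth x0 dE); lia. Qed.

Definition swept (L : int) : Prop :=
  (forall x, a <= x < L -> in_rf ea eb red M Cp Ce P (cP x)) /\
  (forall x, L <= x <= a -> in_rb ea eb red M Cp Ce P (cP x)).

Lemma swept_start : swept (a + 1).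
Proof.
split=> x x_win; last by lia.
have -> : x = a by lia.
by left; rewrite in_setI inE mem_cP andbT -start; apply/mem_P; exists b => //; lia.
Qed.

Lemma swept_interjump (L : int) : cP L \in P -> swept L -> swept (L + 1).
Proof.
move=> PL [fwd bwd]; split=> x x_win; last by apply: bwd; lia.
have [x_lt|x_ge] := ltrP x L; first by apply: fwd; lia.
have -> : x = L by lia.
by left; rewrite in_setI PL inE mem_cP.
Qed.

(* A jump of C_e over the positions [i, i + q) of [sE], leaving C^+ at
   position [v + l] and returning to it at position [v]; [jump_cycle] is its
   C_Q, closed by the arc of C^+ from [v] to [v + l]. *)
Section JumpCycle.
Variables (i : int) (q : nat) (v : int) (l : nat).
Hypotheses (q_gt0 : (0 < q)%N) (b_le_i : b <= i) (i_q_le : i + q%:Z <= b + D%:Z).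
Hypotheses (l_gt0 : (0 < l)%N) (l_lt : (l < nP)%N).
Hypothesis seg_off : forall k, i <= k < i + q%:Z -> cE k \notin sP.
Hypothesis inner_off : forall k, i < k < i + q%:Z -> ~~ onCp (tl (cE k)).
Hypothesis tl_start : tl (cE i) = tl (cP (v + l%:Z)).
Hypothesis tl_end : tl (cE (i + q%:Z)) = tl (cP v).

Local Notation Q := (carc ea eb M Ce (cE i) (cE (i + q%:Z - 1))).

Lemma mem_jump_seg z : z \in Q <-> exists2 k, i <= k < i + q%:Z & z = cE k.
Proof.
rewrite (mem_carc_cnth x0 dE); last by lia.
by split=> -[k k_win ->]; exists k => //; lia.
Qed.

Lemma jump_seg_off z : z \in Q -> z \notin sP.
Proof. by case/mem_jump_seg => k /seg_off + ->. Qed.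

Lemma jump_seg_sub : Q \subset P.
Proof.
apply/subsetP => z /mem_jump_seg [k k_win ->].
by apply/mem_P; exists k => //; lia.
Qed.

Lemma jump_seg_jump : jump ea eb M Cp Ce Q.
Proof.
exists (cE i), (cE (i + q%:Z - 1)); split.
- split; rewrite ?inE ?mem_cE //; apply/negP => /eqP Q_Ce.
  have : cE (i + q%:Z) \in Q by rewrite Q_Ce inE mem_cE.
  by case/mem_jump_seg => k k_win /(cnth_dcycle_inj dE); lia.
- by rewrite tl_start onCp_tl ?mem_cP.
- by rewrite (hd_cnth x0 dE) subrK tl_end onCp_tl ?mem_cP.
- move=> z /mem_jump_seg [k k_win ->] k_ne; rewrite (hd_cnth x0 dE).
  have [k_last|k_lt] : k = i + q%:Z - 1 \/ k + 1 < i + q%:Z by lia.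
    by rewrite k_last eqxx in k_ne.
  by apply: inner_off; lia.
- by rewrite disjoint_subset; apply/subsetP => z /jump_seg_off; rewrite !inE.
Qed.

Definition jump_cycle_edge (k : nat) : E :=
  if (k < q)%N then cE (i + k%:Z) else cP (v + (k - q)%N%:Z).

Definition jump_cycle : {set E} := [set f in mkseq jump_cycle_edge (q + l)].

Lemma jump_cycle_tl_mixed (k1 k2 : nat) : (k1 < q <= k2)%N -> (k2 < q + l)%N ->
  tl (cE (i + k1%:Z)) != tl (cP (v + (k2 - q)%N%:Z)).
Proof.
move=> /andP[k1_lt k2_ge] k2_lt; apply/eqP.
have [k1_0|k1_gt0] := posnP k1.
  by rewrite k1_0 addr0 tl_start => /(tl_cnth_inj dP); lia.
by move=> tl_eq; have := @inner_off (i + k1%:Z); rewrite tl_eq onCp_tl ?mem_cP //; lia.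
Qed.

Lemma jump_cycle_tl_inj : {in gtn (q + l) &, injective (tl \o jump_cycle_edge)}.
Proof.
move=> k1 k2; rewrite !inE /= /jump_cycle_edge => k1_lt k2_lt.
case: (ltnP k1 q) => k1q; case: (ltnP k2 q) => k2q.
- by move/(tl_cnth_inj dE); lia.
- by move/eqP; rewrite (negPf (jump_cycle_tl_mixed _ _)) ?k1q.
- by move/esym/eqP; rewrite (negPf (jump_cycle_tl_mixed _ _)) ?k2q.
- by move/(tl_cnth_inj dP); lia.
Qed.

Lemma jump_cycle_dcycle : dcycle_seq ea eb M (mkseq jump_cycle_edge (q + l)).
Proof.
apply: dcycle_mkseq; [lia | move=> k k_lt | | exact: jump_cycle_tl_inj].
  rewrite /jump_cycle_edge; case: (ltnP k.+1 q) => [k1_lt | k1_ge].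
    by rewrite ltnW // (hd_cnth x0 dE); congr (tl (cE _)); lia.
  case: (ltnP k q) => [k_lt_q | k_ge].
    rewrite (hd_cnth x0 dE) (_ : i + k%:Z + 1 = i + q%:Z) ?tl_end; last by lia.
    by congr (tl (cP _)); lia.
  by rewrite (hd_cnth x0 dP); congr (tl (cP _)); lia.
rewrite /jump_cycle_edge q_gt0 ltnNge (_ : q <= (q + l).-1)%N /=; last by lia.
rewrite (hd_cnth x0 dP) (_ : i + 0%N = i) ?tl_start; last by lia.
by congr (tl (cP _)); lia.
Qed.

Lemma mem_jump_cycle z :
  z \in jump_cycle <-> z \in Q \/ exists2 x, v <= x < v + l%:Z & z = cP x.
Proof.
rewrite inE mem_jump_seg; split.
  case/mkseqP => k k_lt ->; rewrite /jump_cycle_edge.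
  case: (ltnP k q) => k_q; [left | right]; [exists (i + k%:Z) | exists (v + (k - q)%N%:Z)] => //; lia.
case=> [[k k_win ->] | [x x_win ->]]; apply/mkseqP; rewrite /jump_cycle_edge.
  exists (absz (k - i)); first by lia.
  by rewrite ifT; [congr cE | apply/ltP]; lia.
exists (q + absz (x - v))%N; first by lia.
by rewrite ifF; [congr cP | apply/negbTE; rewrite -leqNgt]; lia.
Qed.

Lemma jump_cycle_CQ : is_CQ ea eb M Cp Q jump_cycle.
Proof.
split; first by exists (mkseq jump_cycle_edge (q + l)); split; first exact: jump_cycle_dcycle.
  apply/subsetP => z /mem_jump_cycle [zQ | [x _ ->]]; rewrite in_setU ?zQ ?orbT //.
  by rewrite inE mem_cP.
by apply/subsetP => z zQ; apply/mem_jump_cycle; left.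
Qed.

Lemma reach_jump_cycle (x : int) :
  (if (0 < wM red M jump_cycle)%R then v + l%:Z <= x < v + nP%:Z else v <= x < v + l%:Z) ->
  in_reach ea eb red M Cp Q (cP x).
Proof.
move=> x_win; exists jump_cycle; split; first exact: jump_cycle_CQ.
case: ifP x_win => _ x_win; rewrite in_setD.
  rewrite inE mem_cP andbT; apply/negP => /mem_jump_cycle [/jump_seg_off | [y y_win]].
    by rewrite mem_cP.
  by move/(cnth_dcycle_inj dP); lia.
apply/andP; split; first by apply/negP => /jump_seg_off; rewrite mem_cP.
by apply/mem_jump_cycle; right; exists x.
Qed.

Lemma swept_jump : swept (v + l%:Z) -> exists L, tl (cP L) = tl (cP v) /\ swept L.
Proof.
move=> [fwd bwd]; have Qjump := jump_seg_jump; have QP := jump_seg_sub.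
have CQ := jump_cycle_CQ; have reach := reach_jump_cycle.
case w_pos: (0 < wM red M jump_cycle)%R in reach.
  exists (v + nP%:Z); split; first by rewrite -(cnth_shift _ _ v 1) mul1r.
  split=> x x_win; last by apply: bwd; lia.
  have [x_lt|x_ge] := ltrP x (v + l%:Z); first by apply: fwd; lia.
  by right; exists Q; split=> //; [exists jump_cycle | apply: reach; lia].
exists v; split=> //; split=> x x_win; first by apply: fwd; lia.
have [x_lt|x_ge] := ltrP x (v + l%:Z); last by apply: bwd; lia.
by exists Q; split=> //; [exists jump_cycle; rewrite w_pos | apply: reach; lia].
Qed.

End JumpCycle.

Lemma interjump_or_jump_seg (j0 j : int) : j0 <= j ->
  (forall k, j0 < k <= j -> ~~ onCp (tl (cE k))) ->
  (j0 = j /\ cE j \in sP) \/ forall k, j0 <= k <= j -> cE k \notin sP.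
Proof.
move=> j_win off; have [j0_j | j0_ne] := eqVneq j0 j.
  have [jP | jP] := boolP (cE j \in sP); [by left | right].
  by move=> k k_win; have -> : k = j by lia.
right=> k k_win; apply/negP => kP.
have [k_j0|k_gt] : k = j0 \/ j0 < k by lia.
  by have := @off (j0 + 1); rewrite -(hd_cnth x0 dE) -k_j0 onCp_hd //; lia.
by have := @off k; rewrite onCp_tl //; lia.
Qed.

Lemma sweep_jump_step (j0 j L : int) : b < j0 <= j -> j < b + D%:Z ->
  tl (cE j0) = tl (cP L) ->
  (forall k, j0 < k <= j -> ~~ onCp (tl (cE k))) ->
  (forall k, j0 <= k <= j -> cE k \notin sP) ->
  onCp (tl (cE (j + 1))) -> swept L ->
  exists L', tl (cE (j + 1)) = tl (cP L') /\ swept L'.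
Proof.
move=> j_win j_lt tl_j0 off seg_off on_next swL.
have [v0 tl_v0] := on_dcycleP x0 dP _ on_next.
have [v [cPv v_win _]] := dcycle_window x0 dP (L - nP%:Z) v0.
have v_gt : L - nP%:Z < v.
  have [v_eq|//] : v = L - nP%:Z \/ L - nP%:Z < v by lia.
  have : tl (cE (j + 1)) = tl (cE j0).
    by rewrite tl_v0 -cPv v_eq tl_j0 -(cnth_shift x0 sP (L - nP%:Z) 1) mul1r subrK.
  by move/(tl_cnth_inj dE); lia.
have [q def_q] : exists q : nat, j0 + q%:Z = j + 1 by exists (absz (j - j0 + 1)); lia.
have [l def_L] : exists l : nat, v + l%:Z = L by exists (absz (L - v)); lia.
have [L' [tl_L' swL']] : exists L', tl (cP L') = tl (cP v) /\ swept L'.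
  apply: (@swept_jump j0 q v l); rewrite ?def_q ?def_L ?tl_v0 ?cPv //; try lia.
  - by move=> k k_win; apply: seg_off; lia.
  - by move=> k k_win; apply: off; lia.
by exists L'; rewrite tl_L' tl_v0 cPv.
Qed.

Lemma sweep_step (j0 j L : int) : b < j0 <= j -> j < b + D%:Z ->
  tl (cE j0) = tl (cP L) ->
  (forall k, j0 < k <= j -> ~~ onCp (tl (cE k))) ->
  onCp (tl (cE (j + 1))) -> swept L ->
  exists L', tl (cE (j + 1)) = tl (cP L') /\ swept L'.
Proof.
move=> j_win j_lt tl_j0 off on_next swL.
have [[j0_j jP] | seg_off] := @interjump_or_jump_seg j0 j ltac:(lia) off; last first.
  exact: sweep_jump_step j_win j_lt tl_j0 off seg_off on_next swL.
have cEj : cE j = cP L by apply: (dcycle_tl_inj dP); rewrite ?mem_cP // -j0_j.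
exists (L + 1); split; first by rewrite -!(hd_cnth x0) // cEj.
by apply: swept_interjump => //; rewrite -cEj; apply/mem_P; exists j => //; lia.
Qed.

Lemma sweep (t : nat) : (0 < t <= D)%N ->
  exists j0 L, [/\ b < j0 <= b + t%:Z, tl (cE j0) = tl (cP L),
    forall k, j0 < k <= b + t%:Z -> ~~ onCp (tl (cE k)) & swept L].
Proof.
elim: t => [//|t IHt] t_win.
have [t0|t_gt0] := posnP t.
  exists (b + 1), (a + 1); split; rewrite ?t0 //; [lia | | lia | exact: swept_start].
  by rewrite -(hd_cnth x0 dE) start (hd_cnth x0 dP).
have [j0 [L [j0_win tl_j0 off swL]]] := IHt ltac:(lia).
have [on_next|off_next] := boolP (onCp (tl (cE (b + t.+1%:Z)))).
  have next_eq : b + t.+1%:Z = b + t%:Z + 1 by lia.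
  rewrite next_eq in on_next *.
  have [L' [tl_L' swL']] :=
    @sweep_step j0 (b + t%:Z) L ltac:(lia) ltac:(lia) tl_j0 off on_next swL.
  by exists (b + t%:Z + 1), L'; split=> //; lia.
exists j0, L; split=> //; first by lia.
move=> k k_win; have [->|k_lt] : k = b + t.+1%:Z \/ k <= b + t%:Z by lia.
  exact: off_next.
by apply: off; lia.
Qed.

Lemma sweep_end : cE (b + D%:Z) \in sP -> exists L, cE (b + D%:Z) = cP L /\ swept L.
Proof.
move=> endP; have [j0 [L [j0_win tl_j0 off swL]]] := @sweep D ltac:(lia).
have j0_end : j0 = b + D%:Z.
  have [//|j0_lt] : j0 = b + D%:Z \/ j0 < b + D%:Z by lia.
  by have := @off (b + D%:Z); rewrite onCp_tl //; lia.
exists L; split=> //; apply: (dcycle_tl_inj dP) => //; first exact: mem_cP.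
by rewrite -j0_end.
Qed.

Lemma swept_dichotomy (L : int) : cE (b + D%:Z) = cP L -> swept L ->
  (forall f, f \in carc ea eb M Cp (cP a) (cP L) -> in_rf ea eb red M Cp Ce P f) \/
  (forall f, f \in carc ea eb M Cp (cP L) (cP a) -> in_rb ea eb red M Cp Ce P f).
Proof.
move=> end_L [fwd bwd]; have [a_le_L|L_lt_a] := lerP a L.
  left; have [L' [<- L'_win L'_le]] := dcycle_window x0 dP a L.
  move=> f /(mem_carc_cnth x0 dP) -/(_ L'_win) [x x_win ->].
  have [x_lt|x_ge] := ltrP x L; first by apply: fwd; lia.
  have -> : x = L by lia.
  left; rewrite in_setI [_ \in [set f in sP]]inE mem_cP andbT -end_L.
  by apply/mem_P; exists (b + D%:Z) => //; lia.
right; have [a' [<- a'_win a'_le]] := dcycle_window x0 dP L a.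
by move=> f /(mem_carc_cnth x0 dP) -/(_ a'_win) [x x_win ->]; apply: bwd; lia.
Qed.

End Sweep.

Theorem dcycle_arc_in_reach (A B E : finType) (ea : E -> A) (eb : E -> B)
    (red : pred E) (M Cp Ce : {set E}) (es ef : E) :
  is_dcycle ea eb M Cp -> is_dcycle ea eb M Ce ->
  es != ef -> es \in Cp -> ef \in Cp -> es \in Ce -> ef \in Ce ->
  (forall f, f \in carc ea eb M Cp es ef ->
     in_rf ea eb red M Cp Ce (carc ea eb M Ce es ef) f) \/
  (forall f, f \in carc ea eb M Cp ef es ->
     in_rb ea eb red M Cp Ce (carc ea eb M Ce es ef) f).
Proof.
move=> [sP [dP ->]] [sE [dE ->]] es_ne_ef; rewrite !inE => esP efP esE efE.
have [j [cEj j_win _]] := dcycle_window es dE (index es sE) (index ef sE).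
rewrite cnth_index // in cEj.
have [D def_j] : exists D : nat, j = (index es sE)%:Z + D%:Z by exists (absz (j - index es sE)); lia.
have D_gt0 : (0 < D)%N.
  by rewrite lt0n; apply: contra es_ne_ef => /eqP D0; rewrite -cEj def_j D0 addr0 cnth_index.
have start : cnth es sE (index es sE) = cnth es sP (index es sP) by rewrite !cnth_index.
have D_lt : (D < size sE)%N by lia.
have endP : cnth es sE ((index es sE)%:Z + D%:Z) \in sP by rewrite -def_j cEj.
have [L [end_L swL]] := sweep_end red dP dE start D_gt0 D_lt endP.
have := swept_dichotomy dP dE D_gt0 D_lt end_L swL.
by rewrite -end_L -def_j cEj !cnth_index.
Qed.

Theorem lemma5 (A B E : finType) (ea : E -> A) (eb : E -> B) (red : pred E)
  (k : nat) (Ms M Cp Me Ce : {set E}) (e es ef : E) :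
  simple_graph ea eb ->
  critical ea eb red k Ms M ->
  is_Cplus ea eb red Ms M Cp ->
  e \in Eplus red M Cp ->
  is_Me ea eb red e Me ->
  is_Ce ea eb M Me Ce e ->
  es != ef -> es \in Cp -> ef \in Cp -> es \in Ce -> ef \in Ce ->
  (forall f, f \in carc ea eb M Cp es ef ->
     in_rf ea eb red M Cp Ce (carc ea eb M Ce es ef) f)
  \/
  (forall f, f \in carc ea eb M Cp ef es ->
     in_rb ea eb red M Cp Ce (carc ea eb M Ce es ef) f).
Proof.
move=> _ _ [Cp_cycle _ _] _ _ [Ce_cycle _ _].
exact: dcycle_arc_in_reach.
Qed.
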